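(* Let $V$ be an $n$-dimensional vector space over a field $\mathbb{F}$ with an alternating bilinear form $\mathsf{s}$ of maximal rank, $G=\mathrm{Sp}(V)$, and $C=\{C_i\}_{i\in I}$ a chamber of $\Gamma(V)$. For $J\subseteq I$ let $R_J$ be the residue of type $J$ on $C$ and $P_J=\mathrm{Stab}_G(R_J)$. Then $P_J$ acts flag-transitively on $R_J$.
   Context: $\mathrm{Sp}(V)$: linear automorphisms of $V$ preserving $\mathsf{s}$. $\mathrm{Rad}(U)=U\cap U^\perp$; maximal rank means $\dim\mathrm{Rad}(V)\le1$. $\Gamma(V)$: for $i\in I=\{1,\dots,n-1\}$ the objects of type $i$ are the $i$-dimensional subspaces $U$ with $U\cap\mathrm{Rad}(V)=0$ and $\dim\mathrm{Rad}(U)\le1$; $X,Y$ incident iff $X=Y$, or $X\subseteq Y$ with $X\cap\mathrm{Rad}(Y)=0$, or vice versa. A chamber is a set of pairwise incident objects, one of each type. The residue $R_J$ of type $J$ on $C$ is the pre-geometry induced on the objects incident to all $C_i$, $i\in I\setminus J$, and not among them (so $P_J$ equals the stabilizer of the flag $\{C_i\}_{i\in I\setminus J}$). Flag-transitive on $R_J$: for each $K\subseteq J$, transitive on the flags of $R_J$ of type $K$. *)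

From HB Require Import structures.
From mathcomp Require Import all_boot all_algebra.

Set Implicit Arguments.
Unset Strict Implicit.
Unset Printing Implicit Defensive.

Import GRing.Theory.
Local Open Scope ring_scope.

(* A bilinear form on V is encoded (curried) as a linear map
   s : V -> Hom(V, F), so that s u v is the value of the form on (u, v). *)

Section SymplecticGeometry.
Variables (F : fieldType) (V : vectType F).
Variable s : 'Hom(V, 'Hom(V, F^o)).

Definition alternating_form : Prop := forall u : V, s u u = 0.

Definition perp (U : {vspace V}) : {vspace V} :=
  (\bigcap_(u <- vbasis U) lker (s u))%VS.

Definition rad (U : {vspace V}) : {vspace V} := (U :&: perp U)%VS.

Definition maximal_rank : Prop := (\dim (rad fullv) <= 1)%N.

Definition in_Sp (g : 'End(V)) : Prop :=
  limg g = fullv /\ forall u v : V, s (g u) (g v) = s u v.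

(* objects of type i of Gamma(V) (i should lie in I = {1,...,n-1}) *)
Definition is_object (i : nat) (U : {vspace V}) : Prop :=
  \dim U = i /\ (U :&: rad fullv = 0)%VS /\ (\dim (rad U) <= 1)%N.

Definition incident (X Y : {vspace V}) : Prop :=
  X = Y \/ ((X <= Y)%VS /\ (X :&: rad Y = 0)%VS)
        \/ ((Y <= X)%VS /\ (Y :&: rad X = 0)%VS).

Definition in_I (n i : nat) : bool := (0 < i < n)%N.

Definition chamber (n : nat) (C : nat -> {vspace V}) : Prop :=
  (forall i, in_I n i -> is_object i (C i)) /\
  (forall i j, in_I n i -> in_I n j -> incident (C i) (C j)).

Definition residue_object (n : nat) (C : nat -> {vspace V}) (J : pred nat)
    (X : {vspace V}) : Prop :=
  (exists i, in_I n i /\ is_object i X) /\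
  (forall i, in_I n i -> ~~ J i -> incident X (C i) /\ X <> C i).

Definition residue_flag (n : nat) (C : nat -> {vspace V}) (J K : pred nat)
    (Fl : nat -> {vspace V}) : Prop :=
  (forall k, K k -> is_object k (Fl k) /\ residue_object n C J (Fl k)) /\
  (forall k l, K k -> K l -> incident (Fl k) (Fl l)).

(* P_J: the elements of Sp(V) stabilizing R_J, i.e. the stabilizer of the
   flag {C_i}_{i in I \ J} *)
Definition in_PJ (n : nat) (C : nat -> {vspace V}) (J : pred nat)
    (g : 'End(V)) : Prop :=
  in_Sp g /\ (forall i, in_I n i -> ~~ J i -> (g @: C i)%VS = C i).

Definition flag_transitive (n : nat) (C : nat -> {vspace V}) (J : pred nat)
    : Prop :=
  forall K : pred nat, (forall k, K k -> J k) ->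
  forall Fl1 Fl2 : nat -> {vspace V},
    residue_flag n C J K Fl1 -> residue_flag n C J K Fl2 ->
    exists g : 'End(V), in_PJ n C J g /\
      (forall k, K k -> (g @: Fl1 k)%VS = Fl2 k).

End SymplecticGeometry.

(* Completing a flag of R_J by the objects C_i, i \notin J, gives a flag of
   Gamma(V); together with V it is a chain of subspaces X_t, dim X_t = t, with
   dim Rad X_t <= 1 and X_t meeting Rad X_u trivially for t < u.  Such a chain has
   an adapted standard basis b (X_t spanned by the first t vectors of b), built
   Witt-style one vector at a time inside the next X_u.  An odd-length prefix ends
   with a vector r outside Rad X_u, to which we add a partner e in X_u orthogonal
   to the earlier vectors.  An even-length prefix w is nondegenerate, so vectors
   can be projected orthogonally to it: we add the projection of a vector outside
   <<w>> + Rad X_u, or, if there is none, a generator of the line Rad X_u.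
   The linear map between two standard bases lies in Sp(V); for two flags of R_J
   of the same type it maps one adapted basis, hence one flag, to the other and
   fixes every C_i, i \notin J. *)

From Pilot Require Import Defs.
From HB Require Import structures.
From mathcomp Require Import all_boot all_algebra.

Set Implicit Arguments.
Unset Strict Implicit.
Unset Printing Implicit Defensive.

Import GRing.Theory.
Local Open Scope ring_scope.

Section VectorFacts.
Variables (K : fieldType) (vT : vectType K).

Lemma free_rcons (w : seq vT) e :
  free (rcons w e) = (e \notin <<w>>%VS) && free w.
Proof. by rewrite (perm_free (_ : perm_eq _ (e :: w))) ?free_cons ?perm_rcons. Qed.

Lemma span_rcons (w : seq vT) e : <<rcons w e>>%VS = (<<w>> + <[e]>)%VS.
Proof. by rewrite -cats1 span_cat span_seq1. Qed.

Lemma capv_eq0 (U W : {vspace vT}) :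
  (forall v, v \in U -> v \in W -> v = 0) -> (U :&: W = 0)%VS.
Proof.
move=> UW0; apply/eqP; rewrite -subv0; apply/subvP => v.
by rewrite memv_cap memv0 => /andP[vU vW]; rewrite (UW0 v).
Qed.

End VectorFacts.

Section AlternatingForm.
Variables (F : fieldType) (V : vectType F) (s : 'Hom(V, 'Hom(V, F^o))).
Hypothesis s_alt : alternating_form s.

Lemma formDl u u' v : s (u + u') v = s u v + s u' v.
Proof. by rewrite linearD add_lfunE. Qed.

Lemma formZl a u v : s (a *: u) v = a * s u v.
Proof. by rewrite linearZ scale_lfunE. Qed.

Lemma formBl u u' v : s (u - u') v = s u v - s u' v.
Proof. by rewrite linearB add_lfunE opp_lfunE. Qed.

Lemma form_suml (I : Type) (r : seq I) (P : pred I) (f : I -> V) v :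
  s (\sum_(i <- r | P i) f i) v = \sum_(i <- r | P i) s (f i) v.
Proof. by rewrite linear_sum sum_lfunE. Qed.

Lemma formDr u v v' : s u (v + v') = s u v + s u v'.
Proof. exact: linearD. Qed.

Lemma formZr a u v : s u (a *: v) = a * s u v.
Proof. exact: linearZ. Qed.

Lemma formBr u v v' : s u (v - v') = s u v - s u v'.
Proof. exact: linearB. Qed.

Lemma form_sumr (I : Type) (r : seq I) (P : pred I) (f : I -> V) u :
  s u (\sum_(i <- r | P i) f i) = \sum_(i <- r | P i) s u (f i).
Proof. exact: linear_sum. Qed.

Lemma form_skew u v : s u v = - s v u.
Proof.
apply/eqP; rewrite -addr_eq0; have := s_alt (u + v).
by rewrite formDl !formDr !s_alt add0r addr0 addrC => ->.
Qed.

Lemma form_span_orthr (X : seq V) v u :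
  (forall x, x \in X -> s v x = 0) -> u \in <<X>>%VS -> s v u = 0.
Proof.
move=> vX; suff /subvP/(_ u) : (<<X>> <= lker (s v))%VS.
  by rewrite memv_ker => /[apply]/eqP.
by apply/span_subvP => x /vX sx0; rewrite memv_ker sx0.
Qed.

Lemma form_span_orthl (X : seq V) v u :
  (forall x, x \in X -> s x v = 0) -> u \in <<X>>%VS -> s u v = 0.
Proof.
move=> Xv uX; rewrite form_skew (@form_span_orthr X) ?oppr0 // => x /Xv.
by rewrite form_skew => /eqP; rewrite oppr_eq0 => /eqP.
Qed.

Lemma perpE (U : {vspace V}) v :
  (v \in perp s U) = all (fun u => s u v == 0) (vbasis U).
Proof.
rewrite /perp; elim: (tval (vbasis U)) => [|x l IH]; first by rewrite big_nil memvf.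
by rewrite big_cons memv_cap memv_ker IH.
Qed.

Lemma memv_perp (U : {vspace V}) v :
  reflect (forall u, u \in U -> s u v = 0) (v \in perp s U).
Proof.
rewrite perpE; apply: (iffP allP) => [Uv u | Uv u /vbasis_mem /Uv -> //].
rewrite -(span_basis (vbasisP U)) => /form_span_orthl; apply=> x /Uv.
exact/eqP.
Qed.

Lemma memv_rad (U : {vspace V}) v :
  reflect (v \in U /\ forall u, u \in U -> s u v = 0) (v \in Defs.rad s U).
Proof. by rewrite memv_cap; apply: (iffP andP) => -[vU /memv_perp]. Qed.

Lemma memv_radPn (U : {vspace V}) v : v \in U -> v \notin Defs.rad s U ->
  exists2 u, u \in U & s u v != 0.
Proof.
rewrite memv_cap => -> /=; rewrite perpE => /allPn[u /vbasis_mem uU suv].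
by exists u.
Qed.

(* [hgram i j] is s b_i b_j for a standard basis b: the pairs (b_0, b_1),
   (b_2, b_3), ... are hyperbolic (s b_2k b_2k+1 = 1) and mutually orthogonal;
   when dim V is odd the last vector spans Rad V. *)
Definition hgram (i j : nat) : F :=
  ((j == i.+1) && ~~ odd i)%:R - ((i == j.+1) && ~~ odd j)%:R.

Lemma hgramC i j : hgram j i = - hgram i j.
Proof. by rewrite /hgram opprB. Qed.

Lemma hgram_diag i : hgram i i = 0.
Proof. by rewrite /hgram subrr. Qed.

Lemma hgram_pair m : odd m -> hgram m.-1 m = 1.
Proof.
by case: m => // m /= om; rewrite /hgram eqxx om ltn_eqF ?subr0.
Qed.

Lemma hgram_far i m : (i.+1 < m)%N -> hgram i m = 0.
Proof.
move=> im; have im' : (i < m.+1)%N := ltnW (ltnW im).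
by rewrite /hgram (gtn_eqF im) (ltn_eqF im') subrr.
Qed.

Lemma hgram_even i m : (i < m)%N -> ~~ odd m -> hgram i m = 0.
Proof.
move=> im em; rewrite /hgram (ltn_eqF (ltnW im : (i < m.+1)%N)) /=.
case: eqP em => [-> /=|_ _]; last by rewrite subrr.
by rewrite negbK => ->; rewrite subrr.
Qed.

Lemma hgramE j i :
  hgram j i = if odd j then - (i == j.-1)%:R else (i == j.+1)%:R.
Proof.
case: j => [|k]; rewrite /hgram /=; first by rewrite andbT subr0.
case: (boolP (odd k)) => ok /=; rewrite ?andbT ?andbF.
  by rewrite eqSS; case: (k =P i) => [<-|_]; rewrite ?ok subr0.
by rewrite eqSS sub0r; case: (k =P i) => [<-|/nesym/eqP/negPf ->]; rewrite ?eqxx ?ok.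
Qed.

Lemma sum_hgram m (c : nat -> F) j : ~~ odd m -> (j < m)%N ->
  \sum_(i < m) c i * hgram j i = if odd j then - c j.-1 else c j.+1.
Proof.
move=> em jm.
have pick k : (k < m)%N -> \sum_(i < m) c i * (i == k :> nat)%:R = c k.
  move=> km; have := big_ord1_eq +%R c k m; rewrite km big_mkcond /= => <-.
  by apply: eq_bigr => i _; case: eqP; rewrite ?mulr1 ?mulr0.
under eq_bigr => i _ do rewrite hgramE.
case oj: (odd j).
  under eq_bigr => i _ do rewrite mulrN.
  by rewrite sumrN pick // (leq_ltn_trans (leq_pred j) jm).
rewrite pick // ltn_neqAle jm andbT; apply: contraNneq em => <-.
by rewrite /= oj.
Qed.

Definition std_seq (w : seq V) :=
  forall i j, (i < size w)%N -> (j < size w)%N -> s w`_i w`_j = hgram i j.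

Lemma std_seq_rcons w x : std_seq w ->
  (forall i, (i < size w)%N -> s w`_i x = hgram i (size w)) ->
  std_seq (rcons w x).
Proof.
move=> w_std wx i j; rewrite size_rcons !ltnS !nth_rcons.
case: ltngtP => // [iw|->] _; case: ltngtP => // [jw|->] _.
- exact: w_std.
- exact: wx.
- by rewrite form_skew wx // hgramC opprK.
by rewrite s_alt hgram_diag.
Qed.

Lemma std_seq_rconsK w x : std_seq (rcons w x) -> std_seq w.
Proof.
move=> wx_std i j iw jw; have := wx_std i j.
by rewrite size_rcons !nth_rcons iw jw !ltnS (ltnW iw) (ltnW jw); apply.
Qed.

Section EvenStdSeq.
Variable w : seq V.
Hypotheses (w_std : std_seq w) (w_even : ~~ odd (size w)).

Lemma form_std_even (c : nat -> F) j : (j < size w)%N ->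
  s w`_j (\sum_(i < size w) c i *: w`_i) = if odd j then - c j.-1 else c j.+1.
Proof.
move=> jw; rewrite -(@sum_hgram (size w)) // form_sumr.
by apply: eq_bigr => i _; rewrite formZr w_std.
Qed.

Lemma std_even_orth_proj u :
  exists2 p, p \in <<w>>%VS & forall j, (j < size w)%N -> s w`_j (u - p) = 0.
Proof.
pose c i := if odd i then s w`_i.-1 u else - s w`_i.+1 u.
exists (\sum_(i < size w) c i *: w`_i).
  by apply: memv_suml => i _; rewrite memvZ // memv_span // mem_nth.
move=> j jw; rewrite formBr form_std_even // /c.
case: j jw => [|j] /= jw; first by rewrite subrr.
by case: (odd j); rewrite /= ?opprK subrr.
Qed.

Lemma std_even_partner (X : {vspace V}) r : (<<w>> <= X)%VS ->
  r \in X -> r \notin Defs.rad s X -> (forall j, (j < size w)%N -> s w`_j r = 0) ->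
  exists e, [/\ e \in X, s r e = 1 & forall j, (j < size w)%N -> s w`_j e = 0].
Proof.
move=> wX rX rR wr; have [u uX ur] := memv_radPn rX rR.
have [p pw up] := std_even_orth_proj u.
have pr : s p r = 0 by apply: form_span_orthl pw => x /(nthP 0)[j jw <-]; apply: wr.
have ry : s r (u - p) != 0 by rewrite form_skew formBl pr subr0 oppr_eq0.
exists ((s r (u - p))^-1 *: (u - p)); split.
- by rewrite memvZ // memvB // (subvP wX).
- by rewrite formZr mulVf.
by move=> j jw; rewrite formZr up // mulr0.
Qed.

End EvenStdSeq.

Lemma rad_sub (U : {vspace V}) : (Defs.rad s U <= U)%VS.
Proof. exact: capvSl. Qed.

Definition std_in (X : {vspace V}) (w : seq V) :=
  [/\ std_seq w, free w, (<<w>> <= X)%VS & (<<w>> :&: Defs.rad s X = 0)%VS].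

Lemma std_in_rcons X w e : std_in X w -> e \in X ->
  e \notin (<<w>> + Defs.rad s X)%VS -> std_seq (rcons w e) ->
  std_in X (rcons w e).
Proof.
case=> _ w_free wX wR eX e_out we_std.
have e_w : e \notin <<w>>%VS by apply: contra e_out; apply/subvP/addvSl.
split => //; first by rewrite free_rcons e_w.
  by rewrite span_rcons subv_add wX -memvE.
apply: capv_eq0 => v; rewrite span_rcons.
move=> /memv_addP[a aw [_ /vlineP[c ->] ->]] vR.
have [c0 | cn0] := eqVneq c 0.
  move: vR; rewrite c0 scale0r addr0 => aR.
  by apply/eqP; rewrite -memv0 -wR memv_cap aw.
(* if c != 0 then e = c^-1 *: (v - a) lies in <<w>> + Rad X *)
case/negP: e_out; rewrite -[e](scalerK cn0) -[c *: e](addKr a).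
rewrite memvZ // memvD //; first by rewrite memvN (subvP (addvSl _ _)).
exact: subvP (addvSr _ _) _ vR.
Qed.

Lemma std_in_grow_odd X w r : std_in X (rcons w r) -> ~~ odd (size w) ->
  exists e, std_in X (rcons (rcons w r) e).
Proof.
move=> wr_in w_even; have [wr_std wr_free wrX wrR] := wr_in.
have w_std := std_seq_rconsK wr_std.
have wr j : (j < size w)%N -> s w`_j r = 0.
  move=> jw; have := wr_std j (size w); rewrite size_rcons !nth_rcons jw ltnn eqxx.
  by rewrite hgram_even // ltnS (ltnW jw) ltnSn; apply.
have r_wr : r \in <<rcons w r>>%VS by rewrite memv_span // mem_rcons mem_head.
have rX : r \in X := subvP wrX r r_wr.
have r0 : r != 0 by apply: contraTneq wr_free => ->; rewrite free_rcons mem0v.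
have rR : r \notin Defs.rad s X.
  by apply: contra r0 => rR; rewrite -memv0 -wrR memv_cap r_wr.
have wX : (<<w>> <= X)%VS by apply: subv_trans wrX; rewrite span_rcons addvSl.
have [e [eX re ew]] := std_even_partner w_std w_even wX rX rR wr.
have r_orth x : x \in rcons w r -> s r x = 0.
  rewrite mem_rcons inE => /predU1P[-> | /(nthP 0)[j jw <-]]; first exact: s_alt.
  by rewrite form_skew wr ?oppr0.
exists e; apply: std_in_rcons => //.
  (* s r _ vanishes on <<rcons w r>> + Rad X, whereas s r e = 1 *)
  apply/negP => /memv_addP[a a_wr [b bR eE]]; move: re.
  rewrite eE formDr (form_span_orthr r_orth a_wr) add0r.
  have /memv_rad[_ Rb] := bR.
  by rewrite Rb // => /eqP; rewrite eq_sym oner_eq0.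
apply: std_seq_rcons => // j.
rewrite size_rcons ltnS leq_eqVlt => /predU1P[-> | jw].
  by rewrite nth_rcons ltnn eqxx re (@hgram_pair (size w).+1).
by rewrite nth_rcons jw ew // hgram_far.
Qed.

Lemma std_in_grow_even X w : (\dim (Defs.rad s X) <= 1)%N -> std_in X w ->
  ~~ odd (size w) -> ~~ (X <= <<w>>)%VS ->
  exists e, std_in X (rcons w e) \/
    [/\ std_seq (rcons w e), free (rcons w e) & <<rcons w e>>%VS = X].
Proof.
move=> rad1 w_in w_even Xw; have [w_std w_free wX _] := w_in.
have we_std e : (forall j, (j < size w)%N -> s w`_j e = 0) -> std_seq (rcons w e).
  by move=> we; apply: std_seq_rcons => // j jw; rewrite we // hgram_even.
have [XwR | /subvPn[x xX xwR]] := boolP (X <= <<w>> + Defs.rad s X)%VS.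
  have [x xX xw] := subvPn Xw.
  have [a aw [r rR xE]] := memv_addP (subvP XwR x xX).
  have rw : r \notin <<w>>%VS by apply: contra xw; rewrite xE; apply: memvD.
  have /memv_rad[rX Rr] := rR.
  have rE : <[r]>%VS = Defs.rad s X.
    have r0 : r != 0 by apply: contraNneq rw => ->; rewrite mem0v.
    by apply/eqP; rewrite eqEdim -memvE rR dim_vline r0.
  exists r; right; split.
  - by apply: we_std => j jw; rewrite Rr // (subvP wX) // memv_span // mem_nth.
  - by rewrite free_rcons rw.
  by apply/eqP; rewrite eqEsubv span_rcons rE subv_add wX rad_sub XwR.
have [p pw xp] := std_even_orth_proj w_std w_even x.
exists (x - p); left; apply: std_in_rcons => //.
- by rewrite memvB // (subvP wX).
- apply: contra xwR; rewrite -{2}(subrK p x); move/memvD; apply.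
  exact: subvP (addvSl _ _) _ pw.
exact: we_std.
Qed.

Lemma std_in_complete X w : (\dim (Defs.rad s X) <= 1)%N -> std_in X w ->
  exists w', [/\ std_seq (w ++ w'), free (w ++ w') & <<w ++ w'>>%VS = X].
Proof.
move=> rad1; have [k] := ubnP (\dim X - size w); elim: k w => // k IH w lt_k w_in.
have [w_std w_free wX _] := w_in.
have [Xw | Xw] := boolP (X <= <<w>>)%VS.
  by exists [::]; rewrite cats0; split => //; apply/eqP; rewrite eqEsubv wX.
have [e [we_in | we_basis]] : exists e, std_in X (rcons w e) \/
    [/\ std_seq (rcons w e), free (rcons w e) & <<rcons w e>>%VS = X].
- have [w_odd | w_even] := boolP (odd (size w)); last exact: std_in_grow_even.
  move: w_in w_odd {w_std w_free wX Xw lt_k}; case/lastP: w => // w r w_in.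
  rewrite size_rcons /= => w_even.
  by have [e] := std_in_grow_odd w_in w_even; exists e; left.
- have w_lt : (size w < \dim X)%N.
    by rewrite -(eqP w_free) (ltn_leqif (dimv_leqif_sup wX)).
  have [|w' w'_basis] := IH (rcons w e) _ we_in.
    by rewrite size_rcons subnS -ltnS prednK // subn_gt0.
  by exists (e :: w'); rewrite -cat_rcons.
by exists [:: e]; rewrite cats1.
Qed.

Section Chain.
Variables (T : pred nat) (X : nat -> {vspace V}).
Hypotheses (X_dim : forall t, T t -> \dim (X t) = t)
  (X_rad : forall t, T t -> (\dim (Defs.rad s (X t)) <= 1)%N)
  (X_chain : forall t u, T t -> T u -> (t < u)%N ->
     (X t <= X u)%VS /\ (X t :&: Defs.rad s (X u) = 0)%VS).

Definition std_prefix m w := [/\ std_seq w, free w, (size w <= m)%N,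
  forall t, T t -> (t <= m)%N -> (t <= size w)%N /\ <<take t w>>%VS = X t &
  forall t, T t -> (m < t)%N -> std_in (X t) w].

Lemma std_prefix0 : std_prefix 0 [::].
Proof.
split=> // [|t Tt|t _ _]; first exact: nil_free.
  rewrite leqn0 => /eqP t0; move: Tt; rewrite {}t0 => /X_dim/eqP.
  by rewrite dimv_eq0 span_nil => /eqP.
by split; rewrite ?nil_free ?span_nil ?sub0v ?cap0v.
Qed.

Lemma std_prefixS m w : std_prefix m w -> exists w', std_prefix m.+1 w'.
Proof.
case=> w_std w_free w_m below above.
have [Tm | Tm] := boolP (T m.+1); last first.
  exists w; split => // [|t Tt|t Tt mt]; first exact: leqW.
    rewrite leq_eqVlt => /predU1P[tm | /(below t Tt) //].
    by move: Tm; rewrite -tm Tt.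
  by apply: above => //; apply: ltnW.
have [w' [ww'_std ww'_free ww'E]] :=
  std_in_complete (X_rad Tm) (above _ Tm (ltnSn m)).
have ww'_size : size (w ++ w') = m.+1 by rewrite -(X_dim Tm) -ww'E (eqP ww'_free).
exists (w ++ w'); split => // [|t Tt|t Tt mt]; first by rewrite ww'_size.
  rewrite leq_eqVlt => /predU1P[-> | tm].
    by rewrite ww'_size take_oversize ?ww'_size.
  have [tw <-] := below t Tt tm.
  by rewrite takel_cat // size_cat (leq_trans tw) ?leq_addr.
by have [] := X_chain Tm Tt mt; rewrite -ww'E.
Qed.

Lemma std_chain_basis n : T n -> (forall t, T t -> (t <= n)%N) ->
  exists b, [/\ std_seq b, free b, size b = n &
    forall t, T t -> <<take t b>>%VS = X t].
Proof.
move=> Tn T_le.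
have [b [b_std b_free b_le below _]] : exists w, std_prefix n w.
  elim: n {Tn T_le} => [|m [w /std_prefixS]] //; exists [::]; exact: std_prefix0.
have b_size : size b = n by apply/eqP; rewrite eqn_leq b_le; case: (below n Tn).
by exists b; split => // t Tt; case: (below t Tt (T_le t Tt)).
Qed.

End Chain.

Lemma form_std_coord (b : seq V) m (c d : 'I_m -> F) : std_seq b -> size b = m ->
  s (\sum_(i < m) c i *: b`_i) (\sum_(j < m) d j *: b`_j) =
  \sum_(i < m) \sum_(j < m) c i * d j * hgram i j.
Proof.
move=> b_std b_size; rewrite form_suml; apply: eq_bigr => i _.
rewrite formZl form_sumr mulr_sumr; apply: eq_bigr => j _.
by rewrite formZr b_std ?b_size // mulrA.
Qed.

Lemma std_seq_isometry (b1 b2 : seq V) : std_seq b1 -> std_seq b2 ->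
  free b1 -> free b2 -> size b1 = \dim (fullv : {vspace V}) ->
  size b2 = size b1 -> exists g : 'End(V),
    in_Sp s g /\ forall t, (g @: <<take t b1>>)%VS = <<take t b2>>%VS.
Proof.
move=> b1_std b2_std b1_free b2_free b1_size b2_size.
have [f fE] := linear_of_free b1 b2; pose g : 'End(V) := linfun f.
have gb : map g b1 = b2.
  by rewrite -(fE b1_free b2_size); apply: eq_map => x; rewrite lfunE.
have full (b : seq V) :
    free b -> size b = \dim (fullv : {vspace V}) -> <<b>>%VS = fullv.
  by move=> /eqP b_free b_size; apply/eqP; rewrite eqEdim subvf b_free b_size leqnn.
have b1_full := full b1 b1_free b1_size.
have coordE x : x = \sum_(i < size b1) coord (in_tuple b1) i x *: b1`_i.
  by apply: (coord_span (X := in_tuple b1)); rewrite /= b1_full memvf.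
have g_coordE x : g x = \sum_(i < size b1) coord (in_tuple b1) i x *: b2`_i.
  rewrite {1}[x]coordE linear_sum; apply: eq_bigr => i _.
  by rewrite linearZ /= -gb (nth_map 0).
exists g; split => [|t]; last by rewrite limg_span map_take gb.
split=> [|u v]; first by rewrite -{1}b1_full limg_span gb full // b2_size.
rewrite !g_coordE [in RHS](coordE u) [in RHS](coordE v).
by rewrite !form_std_coord.
Qed.

Definition is_flag n (T : pred nat) (X : nat -> {vspace V}) :=
  [/\ forall t, T t -> in_I n t, forall t, T t -> is_object s t (X t) &
      forall t u, T t -> T u -> incident s (X t) (X u)].

Lemma incident_sym (X Y : {vspace V}) : incident s X Y -> incident s Y X.
Proof. by case=> [-> | [XY | YX]]; [left | right; right | right; left]. Qed.

Lemma incident_ltn (X Y : {vspace V}) : incident s X Y -> (\dim X < \dim Y)%N ->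
  (X <= Y)%VS /\ (X :&: Defs.rad s Y = 0)%VS.
Proof.
case=> [-> | [// | [YX _]]]; first by rewrite ltnn.
by rewrite ltnNge dimvS.
Qed.

Lemma flag_std_basis (n : nat) T X :
  \dim (fullv : {vspace V}) = n -> maximal_rank s -> is_flag n T X ->
  exists b, [/\ std_seq b, free b, size b = n &
    forall t, T t -> <<take t b>>%VS = X t].
Proof.
move=> dimV rad1 [TI X_obj X_inc].
have Tn t : T t -> t != n.
  by move/TI; apply: contraTneq => ->; rewrite /in_I ltnn andbF.
pose X' (t : nat) := if t == n then fullv else X t.
have X'E t : T t -> X' t = X t by move/Tn/negPf; rewrite /X' => ->.
have X'n : X' n = fullv by rewrite /X' eqxx.
have [|||||b [b_std b_free b_size bE]] :=
  @std_chain_basis (predU (pred1 n) T) X' _ _ _ n _ _.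
- move=> t /predU1P[-> | Tt]; first by rewrite X'n.
  by rewrite X'E //; case: (X_obj t Tt).
- move=> t /predU1P[-> | Tt]; first by rewrite X'n.
  by rewrite X'E //; case: (X_obj t Tt) => _ [].
- move=> t u /predU1P[-> | Tt] /predU1P[-> | Tu] tu.
  + by rewrite ltnn in tu.
  + by have /andP[_] := TI u Tu; rewrite ltnNge (ltnW tu).
  + by rewrite X'E // X'n subvf; case: (X_obj t Tt) => _ [].
  rewrite !X'E //; apply: incident_ltn; first exact: X_inc.
  by have [-> _] := X_obj t Tt; have [-> _] := X_obj u Tu.
- exact: predU1l.
- by move=> t /predU1P[-> // | /TI/andP[_ /ltnW]].
by exists b; split => // t Tt; rewrite -X'E // bE //; apply: predU1r.
Qed.

Lemma residue_flag_extend n C (J K : pred nat) Fl : chamber s n C ->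
  (forall k, K k -> in_I n k) -> residue_flag s n C J K Fl ->
  is_flag n (fun t => (in_I n t && ~~ J t) || K t)
    (fun t => if K t then Fl t else C t).
Proof.
move=> [C_obj C_inc] KI [Fl_obj Fl_inc].
have TI t : (in_I n t && ~~ J t) || K t -> in_I n t by case/orP=> [/andP[] | /KI].
have TC t : (in_I n t && ~~ J t) || K t -> K t = false -> in_I n t && ~~ J t.
  by case/orP=> [// | ->].
split=> // [t Tt | t u Tt Tu].
  by case: ifP => Kt; [case: (Fl_obj t Kt) | apply/C_obj/TI].
case: ifP => Kt; case: ifP => Ku.
- exact: Fl_inc.
- have /andP[Iu Ju] := TC u Tu Ku.
  by have [_ [_ /(_ u Iu Ju) []]] := Fl_obj t Kt.
- have /andP[It Jt] := TC t Tt Kt.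
  by apply: incident_sym; have [_ [_ /(_ t It Jt) []]] := Fl_obj u Ku.
exact: C_inc (TI t Tt) (TI u Tu).
Qed.

End AlternatingForm.

Theorem corollary5p4 (F : fieldType) (V : vectType F) (n : nat)
    (s : 'Hom(V, 'Hom(V, F^o)))
    (hn : \dim (fullv : {vspace V}) = n)
    (halt : alternating_form s)
    (hmax : maximal_rank s)
    (C : nat -> {vspace V}) (hC : chamber s n C)
    (J : pred nat) (hJ : forall j, J j -> in_I n j) :
  flag_transitive s n C J.
Proof.
move=> K KJ Fl1 Fl2 Fl1_flag Fl2_flag.
have KI k : K k -> in_I n k by move/KJ/hJ.
have [b1 [b1_std b1_free b1_size b1E]] :=
  flag_std_basis halt hn hmax (residue_flag_extend hC KI Fl1_flag).
have [b2 [b2_std b2_free b2_size b2E]] :=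
  flag_std_basis halt hn hmax (residue_flag_extend hC KI Fl2_flag).
have [g [g_Sp gE]] := std_seq_isometry b1_std b2_std b1_free b2_free
  (etrans b1_size (esym hn)) (etrans b2_size (esym b1_size)).
have g_flag t : (in_I n t && ~~ J t) || K t ->
    (g @: (if K t then Fl1 t else C t))%VS = if K t then Fl2 t else C t.
  by move=> Tt; rewrite -b1E // -b2E // gE.
exists g; split => [|k Kk]; last by have := g_flag k; rewrite Kk orbT; apply.
split=> // i Ii Ji; have Ki : K i = false by apply: contraNF Ji => /KJ.
by have := g_flag i; rewrite Ii Ji Ki; apply.
Qed.
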